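(* Let $k$ be a positive integer and let $G$ be a finite, simple, undirected, connected graph of order at least two. (a) If $G$ admits a pairing distance-$k$ resolving set, then $O_{R,k}(G)=\mathcal{M}$. (b) If $G$ admits a quasi-pairing distance-$k$ resolving set, then $O_{R,k}(G)\in\{\mathcal{M},\mathcal{N}\}$.
   Context: $d$ is the shortest-path distance and $d_k(x,y)=\min\{d(x,y),k+1\}$. A set $S\subseteq V(G)$ is a distance-$k$ resolving set if for all distinct $x,y$ some $z\in S$ has $d_k(x,z)\ne d_k(y,z)$. Let $\alpha$ be a positive integer and $X=\{\{u_1,w_1\},\dots,\{u_\alpha,w_\alpha\}\}$ a family of $\alpha$ pairwise disjoint 2-element subsets of $V(G)$ (so $|\bigcup X|=2\alpha$). Call $Z\subseteq V(G)$ a transversal of $X$ if $|Z|=\alpha$ and $Z\cap\{u_i,w_i\}\ne\emptyset$ for all $i$. $X$ is a pairing distance-$k$ resolving set if every transversal $Z$ of $X$ is a distance-$k$ resolving set. $X$ is a quasi-pairing distance-$k$ resolving set if no transversal of $X$ is a distance-$k$ resolving set, but there is a vertex $v\in V(G)-\bigcup X$ such that $Z\cup\{v\}$ is a distance-$k$ resolving set for every transversal $Z$. In the Maker-Breaker distance-$k$ resolving game on $G$, Maker and Breaker alternately select a not-yet-chosen vertex; Maker wins if his selected vertices form a distance-$k$ resolving set, Breaker wins otherwise. $O_{R,k}(G)=\mathcal{M}$ if Maker has a winning strategy whether he moves first or second, $\mathcal{B}$ if Breaker has a winning strategy whether she moves first or second, and $\mathcal{N}$ if the first player has a winning strategy.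 *)

From mathcomp Require Import all_boot.
Set Implicit Arguments. Unset Strict Implicit. Unset Printing Implicit Defensive.

Section Graph.
Variables (T : finType) (e : rel T).

Fixpoint ball (n : nat) (x : T) : {set T} :=
  match n with
  | 0 => [set x]
  | n'.+1 => ball n' x :|: [set y | [exists z in ball n' x, e z y]]
  end.

(* shortest-path distance; any shortest path has length < #|T|
   (returns #|T| if y is unreachable, which never happens in a connected graph) *)
Definition dist (x y : T) : nat := find (fun n => y \in ball n x) (iota 0 #|T|).

Definition distk (k : nat) (x y : T) : nat := minn (dist x y) k.+1.

Definition resolving (k : nat) (S : {set T}) : bool :=
  [forall x, forall y, (x != y) ==> [exists z in S, distk k x z != distk k y z]].

(* Maker-Breaker distance-k resolving game. M = Maker's vertices, B = Breaker's,
   mturn = true iff it is Maker's turn. Fuel n bounds the number of remaining moves. *)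
Fixpoint makerWins (k n : nat) (M B : {set T}) (mturn : bool) : bool :=
  match n with
  | 0 => resolving k M
  | n'.+1 =>
      let F := ~: (M :|: B) in
      if F == set0 then resolving k M else
      if mturn then [exists v in F, makerWins k n' (v |: M) B false]
      else [forall v in F, makerWins k n' M (v |: B) true]
  end.

Definition makerWinsFirst (k : nat) : bool := makerWins k #|T| set0 set0 true.
Definition makerWinsSecond (k : nat) : bool := makerWins k #|T| set0 set0 false.

Inductive outcome := OutM | OutB | OutN | OutUndef.

(* O_{R,k}(G): M if Maker wins as first and second player; B if Breaker wins
   as first and second player (i.e. Maker loses both); N if the first player
   wins (Maker wins moving first, Breaker wins moving first). *)
Definition ORk (k : nat) : outcome :=
  match makerWinsFirst k, makerWinsSecond k with
  | true, true => OutM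
  | false, false => OutB
  | true, false => OutN
  | false, true => OutUndef
  end.

Definition pair_family (X : {set {set T}}) : Prop :=
  0 < #|X| /\ (forall P, P \in X -> #|P| = 2) /\ trivIset X.

Definition transversal (X : {set {set T}}) (Z : {set T}) : bool :=
  (#|Z| == #|X|) && [forall P in X, Z :&: P != set0].

Definition pairing_resolving (k : nat) (X : {set {set T}}) : Prop :=
  pair_family X /\ forall Z, transversal X Z -> resolving k Z.

Definition quasi_pairing_resolving (k : nat) (X : {set {set T}}) : Prop :=
  pair_family X /\
  (forall Z, transversal X Z -> ~~ resolving k Z) /\
  exists v, v \notin cover X /\ forall Z, transversal X Z -> resolving k (v |: Z).

End Graph.

From Pilot Require Import Defs.
From mathcomp Require Import all_boot.
Set Implicit Arguments. Unset Strict Implicit. Unset Printing Implicit Defensive.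

(* Maker plays the pairing strategy: when Breaker claims a vertex of a pair of
   X, Maker answers with the other vertex of that pair; otherwise he claims any
   free vertex.  As the pairs are disjoint, at the end of the game Maker owns a
   vertex of every pair, so his set contains a transversal of X (and, in the
   quasi-pairing case, the extra vertex v, which he claims on his first move);
   resolvability is monotone, so Maker wins.  The pairing strategy works for
   Maker moving second, hence also moving first; in the quasi-pairing case
   Maker needs the first move. *)

Section PairingStrategy.
Variables (T : finType) (e : rel T) (k : nat) (X : {set {set T}}).
Hypotheses (X2 : {in X, forall P : {set T}, #|P| = 2}) (Xtriv : trivIset X).
Implicit Types (A M B P Q S Z : {set T}) (v x : T).

Local Notation free M B := (~: (M :|: B)).

Lemma resolvingS S S' :
  S \subset S' -> resolving e k S -> resolving e k S'.
Proof.
move=> sSS' /forallP resS; apply/forallP => x; apply/forallP => y.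
apply/implyP => nxy; have /existsP [z /andP [zS dz]] := implyP (forallP (resS x) y) nxy.
by apply/existsP; exists z; rewrite (subsetP sSS').
Qed.

Lemma ltn_card_setCU1 v S : v \in ~: S -> #|~: (v |: S)| < #|~: S|.
Proof.
move=> vS; rewrite (cardsD1 v (~: S)) vS ltnS subset_leq_card //.
by apply/subsetP => x; rewrite !inE negb_or.
Qed.

Lemma pair_eq P Q x : P \in X -> Q \in X -> x \in P -> x \in Q -> P = Q.
Proof.
by move=> PX QX xP xQ; rewrite -(def_pblock Xtriv PX xP) (def_pblock Xtriv QX xQ).
Qed.

Definition meets_pairs M := {in X, forall P, M :&: P != set0}.

Definition meeting_supersets_resolve M :=
  forall M', M \subset M' -> meets_pairs M' -> resolving e k M'.

Lemma exists_meeting_transversal M :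
  meets_pairs M -> exists2 Z, Defs.transversal X Z & Z \subset M.
Proof.
move=> meetM.
have hit P : P \in X -> exists x, x \in P :&: M.
  by move=> /meetM /set0Pn [x]; rewrite setIC; exists x.
pose f (Y : {P | P \in X}) := xchoose (hit _ (valP Y)).
have fY (Y : {P | P \in X}) : f Y \in val Y :&: M by apply: xchooseP.
have f_inj : injective f.
  move=> Y1 Y2 eqf; apply: val_inj.
  apply: (pair_eq (valP Y1) (valP Y2) (x := f Y1)).
    by case/setIP: (fY Y1).
  by rewrite eqf; case/setIP: (fY Y2).
exists (f @: {: {P | P \in X}}).
  apply/andP; split; first by rewrite card_imset // card_sig.
  apply/forallP => P; apply/implyP => PX; apply/set0Pn.
  exists (f (exist _ P PX)); rewrite inE imset_f //=.
  by case/setIP: (fY (exist _ P PX)).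
by apply/subsetP => _ /imsetP [Y _ ->]; case/setIP: (fY Y).
Qed.

Lemma transversal_supersets_resolve A :
  (forall Z, Defs.transversal X Z -> resolving e k (A :|: Z)) ->
  meeting_supersets_resolve A.
Proof.
move=> resAZ M sAM /exists_meeting_transversal [Z tZ sZM].
by apply: resolvingS (resAZ Z tZ); rewrite subUset sAM.
Qed.

(* When Maker is to move, at most one pair [Q] (the one Breaker just entered)
   may be unsafe, and it must still have a free vertex. *)
Definition pair_safe M B P :=
  (M :&: P != set0) || (P \subset free M B).

Definition breaker_inv M B := {in X, forall P, pair_safe M B P}.

Definition maker_inv M B := exists Q,
  {in X, forall P, pair_safe M B P || (P == Q) && (P :&: free M B != set0)}.

Lemma pair_safe_maker_claim M B v P : pair_safe M B P -> pair_safe (v |: M) B P.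
Proof.
case/orP=> [meetP | sPF]; apply/orP.
  left; apply: contra_neq meetP => vMP0.
  by apply/eqP; rewrite -subset0 -vMP0 setSI // subsetUr.
case: (boolP (v \in P)) => vP.
  by left; apply/set0Pn; exists v; rewrite inE setU11.
right; apply/subsetP => x xP; have := subsetP sPF x xP.
by rewrite !inE; case: eqVneq xP vP => [-> ->|].
Qed.

Lemma pair_safe_breaker_claim M B v P :
  v \notin P -> pair_safe M B P -> pair_safe M (v |: B) P.
Proof.
move=> vP /orP [meetP | sPF]; apply/orP; [by left | right].
apply/subsetP => x xP; have := subsetP sPF x xP.
by rewrite !inE; case: eqVneq xP vP => [-> ->|].
Qed.

Lemma breaker_inv_disjoint M : [disjoint M & cover X] -> breaker_inv M set0.
Proof.
move=> dMX P PX; apply/orP; right; apply/subsetP => x xP.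
by rewrite setU0 inE (disjointFl dMX) //; apply/bigcupP; exists P.
Qed.

Lemma breaker_inv_maker_inv M B : breaker_inv M B -> maker_inv M B.
Proof. by move=> inv; exists set0 => P /inv ->. Qed.

Lemma maker_inv_meets_pairs M B : free M B = set0 -> maker_inv M B -> meets_pairs M.
Proof.
move=> F0 [Q inv] P PX; have /card_gt0P [x xP] : 0 < #|P| by rewrite X2.
move: (inv P PX); rewrite /pair_safe F0 setI0 eqxx andbF orbF subset0.
by case/orP=> // /eqP P0; rewrite P0 inE in xP.
Qed.

Lemma breaker_move M B v :
  breaker_inv M B -> v \in free M B -> maker_inv M (v |: B).
Proof.
move=> inv vF; exists (pblock X v) => P PX.
case: (boolP (v \in P)) => vP; last by rewrite pair_safe_breaker_claim ?inv.
case/orP: (inv P PX) => [meetP | sPF]; first by rewrite /pair_safe meetP.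
rewrite (def_pblock Xtriv PX vP) eqxx /=; apply/orP; right; apply/set0Pn.
have /card_gt0P [u] : 0 < #|P :\ v|.
  by have := cardsD1 v P; rewrite X2 // vP add1n => -[<-].
rewrite !inE => /andP [nuv uP]; exists u.
by move: (subsetP sPF u uP); rewrite !inE uP (negbTE nuv).
Qed.

Lemma maker_move M B :
  maker_inv M B -> free M B != set0 ->
  exists2 v, v \in free M B & breaker_inv (v |: M) B.
Proof.
move=> [Q inv] F_ne.
have [v vQ vF] : exists2 v, (Q :&: free M B != set0 -> v \in Q) & v \in free M B.
  case: (set_0Vmem (Q :&: free M B)) => [-> | [v /setIP [vQ vF]]].
    by case/set0Pn: F_ne => v vF; exists v; rewrite ?eqxx.
  by exists v.
exists v => // P PX; case/orP: (inv P PX) => [/pair_safe_maker_claim // | /andP [/eqP PQ]].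
rewrite PQ => /vQ vP; apply/orP; left; apply/set0Pn.
by exists v; rewrite !inE eqxx vP.
Qed.

Lemma pairing_strategy n M B :
  #|free M B| <= n -> meeting_supersets_resolve M ->
  (breaker_inv M B -> makerWins e k n M B false) /\
  (maker_inv M B -> makerWins e k n M B true).
Proof.
have game_over M' B' : free M' B' = set0 -> meeting_supersets_resolve M' ->
    maker_inv M' B' -> resolving e k M'.
  by move=> F0 resM /(maker_inv_meets_pairs F0); apply: resM.
elim: n M B => [|n IH] M B le_free resM.
  have F0 : free M B = set0 by apply: cards0_eq; apply/eqP; rewrite -leqn0.
  by split=> [/breaker_inv_maker_inv|]; apply: game_over.
split=> [inv | inv] /=; case: eqP => [F0 | /eqP F_ne].
- exact/(game_over _ _ F0 resM)/breaker_inv_maker_inv.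
- apply/forallP => v; apply/implyP => vF.
  apply: (IH M (v |: B) _ resM).2; last exact: breaker_move.
  by rewrite -ltnS (leq_trans _ le_free) // setUCA ltn_card_setCU1.
- exact: game_over F0 resM inv.
- have [v vF inv'] := maker_move inv F_ne.
  apply/existsP; exists v; rewrite vF; apply: (IH (v |: M) B _ _).1 inv'.
    by rewrite -ltnS (leq_trans _ le_free) // -setUA ltn_card_setCU1.
  by move=> M' svM'; apply: resM; apply: subset_trans svM'; apply: subsetUr.
Qed.

End PairingStrategy.

Theorem mainTheorem6 (T : finType) (e : rel T) (k : nat)
  (e_sym : symmetric e) (e_irr : irreflexive e)
  (conn : forall x y : T, connect e x y) (order2 : 1 < #|T|) (kpos : 0 < k) :
  ((exists X : {set {set T}}, pairing_resolving e k X) -> ORk e k = OutM) /\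
  ((exists X : {set {set T}}, quasi_pairing_resolving e k X) ->
     ORk e k = OutM \/ ORk e k = OutN).
Proof.
split.
  case=> X [[_ [X2 Xtriv]] resX].
  have resM : meeting_supersets_resolve e k X set0.
    by apply: transversal_supersets_resolve => // Z; rewrite set0U; apply: resX.
  have fuel : #|~: (set0 :|: set0 : {set T})| <= #|T| by rewrite setU0 setC0 cardsT.
  have inv : breaker_inv X set0 set0.
    by apply: breaker_inv_disjoint; rewrite -setI_eq0 set0I.
  have [second first] := pairing_strategy X2 Xtriv fuel resM.
  rewrite /ORk /makerWinsFirst /makerWinsSecond (second inv).
  by rewrite (first (breaker_inv_maker_inv inv)).
case=> X [[_ [X2 Xtriv]] [_ [v [vX resX]]]].
have resM : meeting_supersets_resolve e k X [set v].
  exact: transversal_supersets_resolve.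
have first : makerWinsFirst e k.
  rewrite /makerWinsFirst -(prednK (ltnW order2)) /= setU0 setC0.
  case: eqP => [T0 | _]; first by move: (in_setT v); rewrite T0 inE.
  apply/existsP; exists v; rewrite in_setT setU0 /=.
  apply: (pairing_strategy X2 Xtriv _ resM).1; first by rewrite setU0 cardsC1.
  by apply: breaker_inv_disjoint; rewrite disjoints1.
by rewrite /ORk first; case: makerWinsSecond; [left | right].
Qed.
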